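(* Let $K$ be a lattice of finite length. (i) If $e$ is a nonzero join-prime element of $K$, $f\in K$, and $e\le f$, then the subposet $L:=K\setminus[e,f]$ of $K$ is a lattice. (ii) Let $t$ be a positive integer and let $K_1,\dots,K_t$ be upper semimodular lattices of finite length. Let $K=K_1\times\dots\times K_t$, and let $e=(e_1,\dots,e_t)\in K$ be a nonzero join-prime element. Such an $e$ has exactly one index $i\in\{1,\dots,t\}$ with $e_i\neq 0_i$, where $0_j$ is the bottom of $K_j$. Let $f=(f_1,\dots,f_t)\in K$ be such that $f_i=1_i$, the top element of $K_i$. Then the subposet $L:=K\setminus[e,f]$ of $K$ is an upper semimodular lattice, and it is a join-subsemilattice of $K$.
   Context: An element $u$ of a lattice is join-prime if $u\le x\vee y$ implies $u\le x$ or $u\le y$. $[e,f]=\{x: e\le x\le f\}$ denotes an interval. A lattice is upper semimodular if for all $x,y$, $x\wedge y\prec x$ implies $y\prec x\vee y$, where $\prec$ is the covering relation. *)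

From HB Require Import structures.
From mathcomp Require Import all_boot all_order.
Set Implicit Arguments. Unset Strict Implicit. Unset Printing Implicit Defensive.
Import Order.TTheory.
Local Open Scope order_scope.

Section SubPoset.
Variables (T : Type) (le : T -> T -> Prop) (S : T -> Prop).

Definition is_lub_in (x y z : T) : Prop :=
  S z /\ le x z /\ le y z /\ forall w, S w -> le x w -> le y w -> le z w.

Definition is_glb_in (x y z : T) : Prop :=
  S z /\ le z x /\ le z y /\ forall w, S w -> le w x -> le w y -> le w z.

Definition sub_lattice : Prop :=
  forall x y, S x -> S y ->
    (exists z, is_lub_in x y z) /\ (exists z, is_glb_in x y z).

Definition covers_in (x y : T) : Prop :=
  S x /\ S y /\ le x y /\ x <> y /\
  forall z, S z -> le x z -> le z y -> z = x \/ z = y.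

Definition sub_usm_lattice : Prop :=
  sub_lattice /\
  forall x y m j, S x -> S y -> is_glb_in x y m -> is_lub_in x y j ->
    covers_in m x -> covers_in y j.
End SubPoset.

Definition finite_length d (K : porderType d) : Prop :=
  exists n : nat, forall s : seq K, sorted <%O s -> (size s <= n)%N.

Definition join_prime d (K : latticeType d) (u : K) : Prop :=
  forall x y : K, u <= x `|` y -> u <= x \/ u <= y.

Definition covby d (K : porderType d) (x y : K) : Prop :=
  x < y /\ forall z : K, x < z -> z < y -> False.

Definition upper_semimodular d (K : latticeType d) : Prop :=
  forall x y : K, covby (x `&` y) x -> covby y (x `|` y).

Section Product.
Variables (t : nat) (dK : 'I_t -> Order.disp_t)
          (K : forall i : 'I_t, tbLatticeType (dK i)).

Definition prodK : Type := forall i : 'I_t, K i.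
Definition prod_le (x y : prodK) : Prop := forall i, x i <= y i.
Definition prod_join (x y : prodK) : prodK := fun i => x i `|` y i.
Definition prod_bot : prodK := fun i => \bot.
Definition prod_join_prime (u : prodK) : Prop :=
  forall x y : prodK, prod_le u (prod_join x y) -> prod_le u x \/ prod_le u y.
End Product.

From HB Require Import structures.
From mathcomp Require Import all_boot all_order.
From Stdlib Require Import Classical FunctionalExtensionality.
Set Implicit Arguments. Unset Strict Implicit. Unset Printing Implicit Defensive.
Import Order.TTheory.
Local Open Scope order_scope.

(* Since e is join-prime, the complement L of [e, f] is closed under joins, so
   joins in L are those of K.  The meet of x and y in L is x ∧ y, unless x ∧ y
   lies in [e, f]; then it is the largest element below x ∧ y that is not above
   e, which exists by finite length because the elements not above e are again
   closed under joins.
   In a product, a join-prime e lives in a single coordinate i, where f is the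
   top; hence an element of L above e leaves f in a coordinate j <> i, and
   moving one coordinate at a time shows that covers in L are covers in K.  A
   cover m ≺ x in L with m the L-meet of x and y then forces m = x ∧ y, and a
   cover in a product changes exactly one coordinate, where it is a cover of the
   factor, so upper semimodularity of the factors applies. *)

Section SubPosetBounds.
Variables (T : Type) (le : T -> T -> Prop) (S : T -> Prop).

Lemma is_lub_in_sub x y z :
  is_lub_in le (fun _ => True) x y z -> S z -> is_lub_in le S x y z.
Proof.
move=> [_ [xz [yz zmin]]] Sz; do 3!split=> //.
by move=> w _; apply: zmin.
Qed.

Lemma is_glb_in_sub x y z :
  is_glb_in le (fun _ => True) x y z -> S z -> is_glb_in le S x y z.
Proof.
move=> [_ [zx [zy zmax]]] Sz; do 3!split=> //.
by move=> w _; apply: zmax.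
Qed.

Lemma is_glb_in_below x y m g :
  (forall a b c, le a b -> le b c -> le a c) ->
  is_glb_in le (fun _ => True) x y m ->
  S g -> le g m -> (forall w, S w -> le w m -> le w g) ->
  is_glb_in le S x y g.
Proof.
move=> le_tr [_ [mx [my mmax]]] Sg gm gmax; split=> //.
split; first exact: le_tr gm mx.
split; first exact: le_tr gm my.
by move=> w Sw wx wy; apply: gmax (mmax w I wx wy).
Qed.

Hypothesis le_anti : forall a b, le a b -> le b a -> a = b.

Lemma is_lub_in_unique x y j j' :
  is_lub_in le S x y j -> is_lub_in le S x y j' -> j = j'.
Proof.
move=> [Sj [xj [yj jmin]]] [Sj' [xj' [yj' jmin']]].
by apply: le_anti; [apply: jmin | apply: jmin'].
Qed.

Lemma is_glb_in_unique x y m m' :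
  is_glb_in le S x y m -> is_glb_in le S x y m' -> m = m'.
Proof.
move=> [Sm [mx [my mmax]]] [Sm' [mx' [my' mmax']]].
by apply: le_anti; [apply: mmax' | apply: mmax].
Qed.

End SubPosetBounds.

Section Lattice.
Variables (d : Order.disp_t) (K : latticeType d).
Implicit Types (e f x y : K).

Lemma join_is_lub x y :
  is_lub_in (fun a b : K => a <= b) (fun _ => True) x y (x `|` y).
Proof.
split=> //; split; first exact: leUl.
split; first exact: leUr.
by move=> w _ xw yw; rewrite leUx xw yw.
Qed.

Lemma meet_is_glb x y :
  is_glb_in (fun a b : K => a <= b) (fun _ => True) x y (x `&` y).
Proof.
split=> //; split; first exact: leIl.
split; first exact: leIr.
by move=> w _ wx wy; rewrite lexI wx wy.
Qed.

Lemma join_prime_outside_itvU e f x y :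
  join_prime e -> ~~ (e <= x <= f) -> ~~ (e <= y <= f) -> ~~ (e <= x `|` y <= f).
Proof.
move=> e_jp x_out y_out; rewrite leUx; apply/negP => /and3P [/e_jp [ex|ey] xf yf].
- by rewrite ex xf in x_out.
- by rewrite ey yf in y_out.
Qed.

End Lattice.

Section BLattice.
Variables (d : Order.disp_t) (K : bLatticeType d).
Implicit Types (e f m x y : K).

Lemma join_closed_max (P : K -> Prop) :
  finite_length K -> P \bot -> (forall a b, P a -> P b -> P (a `|` b)) ->
  exists2 g, P g & forall a, P a -> a <= g.
Proof.
move=> [n chain_le] P0 PU; apply: NNPP => nomax.
have grow g : P g -> exists2 g', P g' & g < g'.
  move=> Pg; have [a Pa nag] : exists2 a, P a & ~~ (a <= g).
    apply: NNPP => none; apply: nomax; exists g => // a Pa.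
    by apply: NNPP => /negP nag; apply: none; exists a.
  by exists (g `|` a); [exact: PU | rewrite lt_leAnge leUl leUx lexx].
have long k : exists s : seq K, [/\ sorted <%O s, size s = k & P (last \bot s)].
  elim: k => [|k [s [s_sorted s_size Ps]]]; first by exists [::].
  have [g' Pg' lt_g'] := grow _ Ps.
  exists (rcons s g'); split; last by rewrite last_rcons.
  - by case: s s_sorted lt_g' {s_size Ps} => //= x s; rewrite rcons_path => -> ->.
  - by rewrite size_rcons s_size.
have [s [s_sorted s_size _]] := long n.+1.
by have := chain_le s s_sorted; rewrite s_size ltnn.
Qed.

Lemma greatest_below_avoiding e m :
  finite_length K -> e != \bot -> join_prime e ->
  exists2 g, g <= m /\ ~~ (e <= g) & forall a, a <= m -> ~~ (e <= a) -> a <= g.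
Proof.
move=> fl e_neq0 e_jp.
have [] := join_closed_max (P := fun a => a <= m /\ ~~ (e <= a)) fl.
- by rewrite le0x lex0.
- move=> a b [am ea] [bm eb]; split; first by rewrite leUx am bm.
  by apply/negP => /e_jp [ae|be]; [move: ea | move: eb]; rewrite ?ae ?be.
- by move=> g [gm eg] gmax; exists g => // a am ea; apply: gmax.
Qed.

Lemma outside_itv_sub_lattice e f :
  finite_length K -> e != \bot -> join_prime e ->
  sub_lattice (fun x y : K => x <= y) (fun x : K => ~~ (e <= x <= f)).
Proof.
move=> fl e_neq0 e_jp x y x_out y_out; split.
  exists (x `|` y); apply: is_lub_in_sub (join_is_lub x y) _.
  exact: join_prime_outside_itvU.
have [m_out|/negPn/andP [em mf]] := boolP (~~ (e <= x `&` y <= f)).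
  by exists (x `&` y); apply: is_glb_in_sub (meet_is_glb x y) _.
have [g [gm eg] gmax] := greatest_below_avoiding (x `&` y) fl e_neq0 e_jp.
exists g; apply: (is_glb_in_below (S := fun x : K => ~~ (e <= x <= f))) gm _.
- by move=> a b c; apply: le_trans.
- exact: meet_is_glb.
- by rewrite negb_and eg.
- move=> w w_out wm; apply: (gmax _ wm).
  by move: w_out; rewrite (le_trans wm mf) andbT.
Qed.

End BLattice.

Section Product.
Variables (t : nat) (dK : 'I_t -> Order.disp_t)
          (K : forall i : 'I_t, tbLatticeType (dK i)).
Implicit Types (a b e f x y z : prodK K).

Local Notation le := (@prod_le _ _ K).

Definition prod_meet x y : prodK K := fun k => x k `&` y k.

Definition prod_upd x (j : 'I_t) (c : K j) : prodK K :=
  fun k => if j =P k is ReflectT jk then ecast k (K k : Type) jk c else x k.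
Arguments prod_upd x j c i : clear implicits.

Definition prod_covby a b : Prop :=
  le a b /\ a <> b /\ forall z, le a z -> le z b -> z = a \/ z = b.

Lemma prod_upd_eq x j c : prod_upd x j c j = c.
Proof.
by rewrite /prod_upd; case: (j =P j) => // jj; rewrite (eq_irrelevance jj erefl).
Qed.

Lemma prod_upd_neq x j c k : j != k -> prod_upd x j c k = x k.
Proof. by rewrite /prod_upd; case: (j =P k) => // ->; rewrite eqxx. Qed.

Lemma prod_ext x y : (forall k, x k = y k) -> x = y.
Proof. exact: functional_extensionality_dep. Qed.

Lemma prod_neq_coord x y : x <> y -> exists k, x k != y k.
Proof.
move=> x_neq_y; apply: NNPP => none; apply/x_neq_y/prod_ext => k.
by case: (eqVneq (x k) (y k)) => // xk; exfalso; apply: none; exists k.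
Qed.

Lemma prod_le_refl x : le x x.
Proof. by move=> k. Qed.

Lemma prod_le_trans x y z : le x y -> le y z -> le x z.
Proof. by move=> xy yz k; apply: le_trans (yz k). Qed.

Lemma prod_le_anti x y : le x y -> le y x -> x = y.
Proof. by move=> xy yx; apply: prod_ext => k; apply: le_anti; rewrite xy yx. Qed.

Lemma prod_upd_le_l a b j c : le a b -> c <= b j -> le (prod_upd a j c) b.
Proof.
move=> ab cb k; case: (eqVneq j k) => [<-|jk]; first by rewrite prod_upd_eq.
by rewrite prod_upd_neq.
Qed.

Lemma prod_upd_le_r a b j c : le a b -> a j <= c -> le a (prod_upd b j c).
Proof.
move=> ab ac k; case: (eqVneq j k) => [<-|jk]; first by rewrite prod_upd_eq.
by rewrite prod_upd_neq.
Qed.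

Lemma prod_join_is_lub x y : is_lub_in le (fun _ => True) x y (prod_join x y).
Proof.
split=> //; split; first by move=> k; apply: leUl.
split; first by move=> k; apply: leUr.
by move=> w _ xw yw k; rewrite leUx xw yw.
Qed.

Lemma prod_meet_is_glb x y : is_glb_in le (fun _ => True) x y (prod_meet x y).
Proof.
split=> //; split; first by move=> k; apply: leIl.
split; first by move=> k; apply: leIr.
by move=> w _ wx wy k; rewrite lexI wx wy.
Qed.

Lemma prod_covbyP a b :
  prod_covby a b <-> exists k, (forall l, l != k -> a l = b l) /\ covby (a k) (b k).
Proof.
split=> [[ab [a_neq_b ab_cov]] | [k [ab_eq [ab_k ab_k_cov]]]].
  have [k ak_neq_bk] := prod_neq_coord a_neq_b.
  have upd_cases l c : a l <= c -> c <= b l ->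
      c = a l \/ c = b l /\ forall m, l != m -> a m = b m.
    move=> ac cb; have ac' := prod_upd_le_r (prod_le_refl a) ac.
    case: (ab_cov _ ac' (prod_upd_le_l ab cb)) => [upd_a|upd_b].
      by left; rewrite -{1}upd_a prod_upd_eq.
    right; split; first by rewrite -{1}upd_b prod_upd_eq.
    by move=> m lm; rewrite -upd_b prod_upd_neq.
  exists k; split.
    move=> l lk; case: (upd_cases l (b l) (ab l) (lexx _)) => [//|[_ ab_eq]].
    by move: ak_neq_bk; rewrite ab_eq ?eqxx // eq_sym.
  split=> [|c ac cb]; first by rewrite lt_neqAle ak_neq_bk ab.
  case: (upd_cases k c (ltW ac) (ltW cb)) => [ca|[cb' _]].
    by move: ac; rewrite ca ltxx.
  by move: cb; rewrite cb' ltxx.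
have ab : le a b.
  by move=> l; case: (eqVneq l k) => [->|lk]; [exact: ltW | rewrite ab_eq].
split=> //; split=> [a_eq_b|z az zb]; first by move: ab_k; rewrite a_eq_b ltxx.
have z_eq l : l != k -> z l = a l.
  by move=> lk; apply: le_anti; rewrite az ab_eq // zb.
case: (eqVneq (a k) (z k)) => [ak_eq|ak_neq]; [left | right].
  by apply: prod_ext => l; case: (eqVneq l k) => [->|lk]; rewrite ?ak_eq // z_eq.
case: (eqVneq (z k) (b k)) => [zk_eq|zk_neq].
  by apply: prod_ext => l; case: (eqVneq l k) => [->|lk]; rewrite ?zk_eq // z_eq // ab_eq.
exfalso; apply: (ab_k_cov (z k)); first by rewrite lt_neqAle ak_neq az.
by rewrite lt_neqAle zk_neq zb.
Qed.

Lemma prod_usm x y :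
  (forall k, upper_semimodular (K k)) ->
  prod_covby (prod_meet x y) x -> prod_covby y (prod_join x y).
Proof.
move=> usm /prod_covbyP [k [meet_eq cov_k]]; apply/prod_covbyP.
exists k; split; last exact: usm.
by move=> l lk; rewrite /prod_join join_r //; apply/meet_idPl/meet_eq.
Qed.

Lemma prod_join_prime_coord e j : prod_join_prime e -> join_prime (e j).
Proof.
move=> e_jp a b eab.
have e_le : le e (prod_join (prod_upd e j a) (prod_upd e j b)).
  move=> k; rewrite /prod_join; case: (eqVneq j k) => [<-|jk].
    by rewrite !prod_upd_eq.
  by rewrite !prod_upd_neq // leUl.
by case: (e_jp _ _ e_le) => /(_ j); rewrite prod_upd_eq; [left | right].
Qed.

Lemma prod_join_prime_support e j k :
  prod_join_prime e -> e j != \bot -> e k != \bot -> j = k.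
Proof.
move=> e_jp ej ek; apply/eqP; apply: contraNT ej => jk.
have e_le : le e (prod_join (prod_upd e j \bot) (prod_upd e k \bot)).
  move=> l; rewrite /prod_join; case: (eqVneq j l) => [<-|jl].
    by rewrite [prod_upd e k _ _]prod_upd_neq 1?eq_sym // leUr.
  by rewrite prod_upd_neq // leUl.
case: (e_jp _ _ e_le) => e_le'.
- by have := e_le' j; rewrite prod_upd_eq lex0.
- by have := e_le' k; rewrite prod_upd_eq lex0 (negbTE ek).
Qed.

Definition prod_outside e f x : Prop := ~ (le e x /\ le x f).

Lemma prod_outside_join e f x y : prod_join_prime e ->
  prod_outside e f x -> prod_outside e f y -> prod_outside e f (prod_join x y).
Proof.
move=> e_jp x_out y_out [/e_jp [ex|ey] jf].
- by apply: x_out; split=> // k; apply: le_trans (jf k); apply: leUl.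
- by apply: y_out; split=> // k; apply: le_trans (jf k); apply: leUr.
Qed.

Section OutsideInterval.
Variables (e f : prodK K) (i : 'I_t).
Hypotheses (e_jp : prod_join_prime e) (e_i_neq0 : e i != \bot) (f_top : f i = \top).

Local Notation L := (prod_outside e f).

Lemma prod_outside_coord x : ~~ (e i <= x i) -> L x.
Proof. by move=> ex [/(_ i) ex' _]; rewrite ex' in ex. Qed.

Lemma prod_outside_notle_coord x j : ~~ (x j <= f j) -> L x.
Proof. by move=> xf [_ /(_ j) xf']; rewrite xf' in xf. Qed.

Lemma prod_outside_below x : L x -> le x f -> ~~ (e i <= x i).
Proof.
move=> x_out xf; apply/negP => ex; apply: x_out; split=> // k.
case: (eqVneq (e k) \bot) => [->|ek]; first exact: le0x.
by rewrite -(prod_join_prime_support e_jp e_i_neq0 ek).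
Qed.

Lemma prod_outside_above x : L x -> le e x -> exists j, ~~ (x j <= f j).
Proof.
move=> x_out ex; apply: NNPP => none; apply: x_out; split=> // k.
by case: (boolP (x k <= f k)) => // xk; exfalso; apply: none; exists k.
Qed.

(* An element z of [e, f] strictly between a and b would put b above e, so b
   leaves f at some j <> i; raising a to b at j alone stays in L. *)
Lemma prod_outside_covers a b : covers_in le L a b -> prod_covby a b.
Proof.
move=> [a_out [b_out [ab [a_neq_b ab_cov]]]]; do 2!split=> //.
move=> z az zb; case: (classic (L z)) => [z_out|/NNPP [ez zf]].
  exact: ab_cov.
have [j bj] := prod_outside_above b_out (prod_le_trans ez zb).
have ji : j != i by apply: contraNneq bj => ->; rewrite f_top lex1.
have ea := prod_outside_below a_out (prod_le_trans az zf).
have lo := prod_upd_le_r (prod_le_refl a) (ab j).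
have hi := prod_upd_le_l ab (lexx (b j)).
have u_out : L (prod_upd a j (b j)).
  by apply: (prod_outside_notle_coord (j := j)); rewrite prod_upd_eq.
case: (ab_cov _ u_out lo hi) => [/(congr1 (fun w => w j))|/(congr1 (fun w => w i))].
  by rewrite prod_upd_eq => bja; rewrite bja (le_trans (az j) (zf j)) in bj.
by rewrite prod_upd_neq // => aib; rewrite aib (le_trans (ez i) (zb i)) in ea.
Qed.

Hypothesis fl_i : finite_length (K i).

Lemma prod_outside_sub_lattice : sub_lattice le L.
Proof.
move=> x y x_out y_out; split.
  exists (prod_join x y); apply: is_lub_in_sub (prod_join_is_lub x y) _.
  exact: prod_outside_join.
case: (classic (L (prod_meet x y))) => [m_out|/NNPP [em mf]].
  by exists (prod_meet x y); apply: is_glb_in_sub (prod_meet_is_glb x y) _.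
have [g [gm eg] gmax] := greatest_below_avoiding (prod_meet x y i) fl_i e_i_neq0
  (prod_join_prime_coord (j := i) e_jp).
exists (prod_upd (prod_meet x y) i g).
apply: (is_glb_in_below (S := L)) (prod_meet_is_glb x y) _ _ _.
- exact: prod_le_trans.
- by apply: prod_outside_coord; rewrite prod_upd_eq.
- exact: prod_upd_le_l (prod_le_refl _) gm.
- move=> w w_out wm; apply: (prod_upd_le_r wm).
  exact: gmax (wm i) (prod_outside_below w_out (prod_le_trans wm mf)).
Qed.

(* If x ∧ y lay in [e, f], it would sit strictly between m and x, although
   m ≺ x is a cover in K. *)
Lemma prod_outside_glb_cover x y m :
  is_glb_in le L x y m -> covers_in le L m x -> m = prod_meet x y.
Proof.
move=> m_glb m_cov; have [_ [_ mx_cov]] := prod_outside_covers m_cov.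
case: (classic (L (prod_meet x y))) => [m_out|m_in].
  apply: (is_glb_in_unique prod_le_anti m_glb).
  exact: is_glb_in_sub (prod_meet_is_glb x y) m_out.
have [m_out [mx [my _]]] := m_glb; have [_ [x_out _]] := m_cov.
have [_ [_ [_ meet_max]]] := prod_meet_is_glb x y.
have [meet_m|meet_x] := mx_cov _ (meet_max m I mx my) (fun k => leIl _ _).
- by rewrite meet_m in m_in.
- by rewrite meet_x in m_in.
Qed.

Lemma prod_outside_usm :
  (forall k, upper_semimodular (K k)) -> sub_usm_lattice le L.
Proof.
move=> usm; split; first exact: prod_outside_sub_lattice.
move=> x y m j x_out y_out m_glb j_lub m_cov.
have j_out := prod_outside_join e_jp x_out y_out.
have -> : j = prod_join x y.
  apply: (is_lub_in_unique prod_le_anti j_lub).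
  exact: is_lub_in_sub (prod_join_is_lub x y) j_out.
have meet_cov : covers_in le L (prod_meet x y) x.
  by rewrite -(prod_outside_glb_cover m_glb m_cov).
have [yj [y_neq_j yj_cov]] := prod_usm usm (prod_outside_covers meet_cov).
by do 4!split=> //; move=> z _; apply: yj_cov.
Qed.

End OutsideInterval.

End Product.

Theorem proposition2p1 :
  (* (i) *)
  (forall (d : Order.disp_t) (K : tbLatticeType d) (e f : K),
      finite_length K -> e != \bot -> join_prime e -> e <= f ->
      sub_lattice (fun x y : K => x <= y) (fun x : K => ~~ (e <= x <= f)))
  /\
  (* (ii) *)
  (forall (t : nat) (dK : 'I_t -> Order.disp_t)
          (K : forall i : 'I_t, tbLatticeType (dK i)) (e : prodK K),
      (0 < t)%N ->
      (forall i, finite_length (K i)) ->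
      (forall i, upper_semimodular (K i)) ->
      e <> prod_bot K -> prod_join_prime e ->
      (exists! i : 'I_t, e i != \bot) /\
      (forall (i : 'I_t) (f : prodK K), e i != \bot -> f i = \top ->
         let L := fun x : prodK K => ~ (prod_le e x /\ prod_le x f) in
         sub_usm_lattice (@prod_le _ _ K) L /\
         (forall x y, L x -> L y -> L (prod_join x y)))).
Proof.
split=> [d K e f fl e_neq0 e_jp _ | t dK K e _ fl usm e_neq0 e_jp].
  exact: outside_itv_sub_lattice.
split.
  have [i ei] := prod_neq_coord e_neq0.
  by exists i; split=> // j ej; apply: prod_join_prime_support e_jp ei ej.
move=> i f ei fi L; split; first exact: prod_outside_usm (fl i) usm.
by move=> x y; apply: prod_outside_join.
Qed.
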